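(* In System $\mathsf{F_{<:}^{K\top}}$, if $\Theta \vdash_A R <: S$ and $\Theta \vdash_A S <: T$, then $\Theta \vdash_A R <: T$.
   Context: System $\mathsf{F_{<:}^{K\top}}$: raw types $T ::= \top \mid X \mid T\to T \mid \forall^{\mathsf K}(X<:T).T \mid \forall^\top(X<:T).T$, up to $\alpha$-conversion. Contexts $\Theta$: finite sequences of $X<:T$ or $x:T$ with distinct variables, each type well-formed (free type variables declared earlier) over the preceding part; $\Theta\vdash T$ means $T$ is well-formed over well-formed $\Theta$. Algorithmic subtyping $\Theta\vdash_A S<:T$ (for $\Theta\vdash S$, $\Theta\vdash T$) is generated by: (1) $\Theta\vdash_A T<:\top$; (2) $\Theta\vdash_A X<:X$; (3) if $T\not\equiv\top$, $T\not\equiv X$ and $\Theta,X<:S,\Theta'\vdash_A S<:T$, then $\Theta,X<:S,\Theta'\vdash_A X<:T$; (4) from $\Theta\vdash_A S'<:S$ and $\Theta\vdash_A T<:T'$ infer $\Theta\vdash_A S\to T<:S'\to T'$; (5) from $\Theta,X<:S\vdash_A T<:T'$ infer $\Theta\vdash_A\forall^{\mathsf K}(X<:S).T<:\forall^{\mathsf K}(X<:S).T'$; (6) from $\Theta\vdash_A T_0<:S_0$ and $\Theta,X<:S_0\vdash_A S_1<:T_1$ infer $\Theta\vdash_A\forall^{\mathsf K}(X<:S_0).S_1<:\forall^\top(X<:T_0).T_1$; (7) from $\Theta\vdash_A T_0<:S_0$ and $\Theta,X<:\top\vdash_A S_1<:T_1$ infer $\Theta\vdash_A\forall^\top(X<:S_0).S_1<:\forall^\top(X<:T_0).T_1$.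 *)

From Stdlib Require Import Arith List.
Import ListNotations.

(* Raw types: Top | X | T -> T | forall^K (X<:T).T | forall^Top (X<:T).T.
   Type variables are de Bruijn indices into the context. *)
Inductive typ : Type :=
  | ty_top : typ
  | ty_var : nat -> typ
  | ty_arrow : typ -> typ -> typ
  | ty_allK : typ -> typ -> typ      (* forall^K (X<:T1). T2, X bound in T2 *)
  | ty_allT : typ -> typ -> typ.     (* forall^Top (X<:T1). T2, X bound in T2 *)

(* Both occupy a de Bruijn position;
   the type in an entry is relative to the part of the context after it
   (i.e. the preceding part, the list being innermost-first). *)
Inductive binding : Type :=
  | b_sub : typ -> binding
  | b_var : typ -> binding.

Definition ctx := list binding.

Fixpoint tshift (c : nat) (T : typ) : typ :=
  match T with
  | ty_top => ty_top
  | ty_var n => ty_var (if Nat.leb c n then S n else n)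
  | ty_arrow T1 T2 => ty_arrow (tshift c T1) (tshift c T2)
  | ty_allK T1 T2 => ty_allK (tshift c T1) (tshift (S c) T2)
  | ty_allT T1 T2 => ty_allT (tshift c T1) (tshift (S c) T2)
  end.

(* Bound of type variable n in the context, expressed relative to the
   whole context; None if entry n is absent or is a term binding. *)
Fixpoint get_bound (E : ctx) (n : nat) : option typ :=
  match E, n with
  | b_sub U :: _, O => Some (tshift 0 U)
  | _ :: E', S m => option_map (tshift 0) (get_bound E' m)
  | _, _ => None
  end.

Fixpoint wf_typ (E : ctx) (T : typ) : Prop :=
  match T with
  | ty_top => True
  | ty_var n => exists U, get_bound E n = Some U
  | ty_arrow T1 T2 => wf_typ E T1 /\ wf_typ E T2
  | ty_allK T1 T2 => wf_typ E T1 /\ wf_typ (b_sub T1 :: E) T2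
  | ty_allT T1 T2 => wf_typ E T1 /\ wf_typ (b_sub T1 :: E) T2
  end.

(* Well-formed contexts: each type well-formed over the preceding part.
   (Distinctness of variables is automatic with de Bruijn indices.) *)
Fixpoint wf_ctx (E : ctx) : Prop :=
  match E with
  | [] => True
  | b_sub T :: E' => wf_ctx E' /\ wf_typ E' T
  | b_var T :: E' => wf_ctx E' /\ wf_typ E' T
  end.

Inductive asub : ctx -> typ -> typ -> Prop :=
  | asub_top : forall E T,
      wf_ctx E -> wf_typ E T ->
      asub E T ty_top
  | asub_refl_tvar : forall E n,
      wf_ctx E -> wf_typ E (ty_var n) ->
      asub E (ty_var n) (ty_var n)
  | asub_trans_tvar : forall E n S T,
      get_bound E n = Some S ->
      T <> ty_top -> T <> ty_var n ->
      asub E S T ->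
      asub E (ty_var n) T
  | asub_arrow : forall E S S' T T',
      asub E S' S -> asub E T T' ->
      asub E (ty_arrow S T) (ty_arrow S' T')
  | asub_allK : forall E S T T',
      asub (b_sub S :: E) T T' ->
      asub E (ty_allK S T) (ty_allK S T')
  | asub_allK_allT : forall E S0 S1 T0 T1,
      asub E T0 S0 -> asub (b_sub S0 :: E) S1 T1 ->
      asub E (ty_allK S0 S1) (ty_allT T0 T1)
  | asub_allT : forall E S0 S1 T0 T1,
      asub E T0 S0 -> asub (b_sub ty_top :: E) S1 T1 ->
      asub E (ty_allT S0 S1) (ty_allT T0 T1).

(* Transitivity is proved by well-founded induction on the size of the middle
   type, with an inner induction on the left derivation to get past the
   variable-promotion steps.  The one case not covered by the induction
   hypothesis alone is [forall^K <: forall^Top <: forall^Top]: the right body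
   is checked under [X <: Top] but must be composed with a left body checked
   under [X <: S0].  A variable bounded by [Top] can never be promoted (only
   [Top] is a supertype of [Top]), so narrowing the bound [Top] to any
   well-formed type preserves subtyping. *)
From Stdlib Require Import Arith List Lia Wf_nat.
Import ListNotations.

Lemma get_bound_rebind_defined : forall G E U U' n,
  (exists X, get_bound (G ++ b_sub U :: E) n = Some X) ->
  exists X, get_bound (G ++ b_sub U' :: E) n = Some X.
Proof.
  induction G as [|b G IH]; intros E U U' n [X HX].
  - destruct n; simpl in *; eauto.
  - destruct b, n; simpl in *; try discriminate; eauto;
      destruct (get_bound (G ++ b_sub U :: E) n) eqn:Hg; try discriminate;
      destruct (IH E U U' n (ex_intro _ _ Hg)) as [Y ->]; simpl; eauto.
Qed.

Lemma get_bound_rebind_neq : forall G E U U' n, n <> length G ->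
  get_bound (G ++ b_sub U :: E) n = get_bound (G ++ b_sub U' :: E) n.
Proof.
  induction G as [|b G IH]; intros E U U' n Hn.
  - destruct n; simpl in *; [lia | reflexivity].
  - destruct b, n; simpl in *; try reflexivity; rewrite (IH E U U' n); auto.
Qed.

Lemma get_bound_top_length : forall G E,
  get_bound (G ++ b_sub ty_top :: E) (length G) = Some ty_top.
Proof.
  induction G as [|b G IH]; intros E; simpl; auto.
  destruct b; rewrite IH; reflexivity.
Qed.

Lemma wf_typ_rebind : forall T G E U U',
  wf_typ (G ++ b_sub U :: E) T -> wf_typ (G ++ b_sub U' :: E) T.
Proof.
  induction T as [| n | T1 IH1 T2 IH2 | T1 IH1 T2 IH2 | T1 IH1 T2 IH2];
    intros G E U U' H; simpl in *; auto.
  - eapply get_bound_rebind_defined; eauto.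
  - destruct H; split; eauto.
  - destruct H; split; eauto. apply (IH2 (b_sub T1 :: G) E U); assumption.
  - destruct H; split; eauto. apply (IH2 (b_sub T1 :: G) E U); assumption.
Qed.

Lemma wf_ctx_rebind : forall G E U U',
  wf_ctx (G ++ b_sub U :: E) -> wf_typ E U' -> wf_ctx (G ++ b_sub U' :: E).
Proof.
  induction G as [|b G IH]; intros E U U' H HU; simpl in *.
  - tauto.
  - destruct b, H; split; eauto using wf_typ_rebind.
Qed.

Lemma asub_regular : forall E A B,
  asub E A B -> wf_ctx E /\ wf_typ E A /\ wf_typ E B.
Proof.
  induction 1; simpl in *; try (intuition eauto; fail).
  - intuition. apply (wf_typ_rebind T1 [] E S0); assumption.
  - intuition.
    + apply (wf_typ_rebind S1 [] E ty_top); assumption.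
    + apply (wf_typ_rebind T1 [] E ty_top); assumption.
Qed.

Lemma asub_top_inv : forall E T, asub E ty_top T -> T = ty_top.
Proof. intros E T H; inversion H; auto. Qed.

Lemma asub_top_right : forall E A B, asub E A B -> asub E A ty_top.
Proof.
  intros E A B H. destruct (asub_regular _ _ _ H) as [? [? _]].
  apply asub_top; assumption.
Qed.

Lemma asub_tvar_of_bound : forall E n S T,
  get_bound E n = Some S -> asub E S T -> asub E (ty_var n) T.
Proof.
  intros E n S T Hn HST.
  destruct (asub_regular _ _ _ HST) as [HE _].
  assert (Hwf : wf_typ E (ty_var n)) by (simpl; eauto).
  destruct T as [| m | | |]; try (eapply asub_trans_tvar; eauto; congruence).
  - apply asub_top; assumption.
  - destruct (Nat.eq_dec m n) as [-> | Hmn].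
    + apply asub_refl_tvar; assumption.
    + eapply asub_trans_tvar; eauto; congruence.
Qed.

Lemma asub_narrow_top : forall G E S A B,
  asub (G ++ b_sub ty_top :: E) A B -> wf_typ E S ->
  asub (G ++ b_sub S :: E) A B.
Proof.
  intros G E S A B H HS. remember (G ++ b_sub ty_top :: E) as E' eqn:HE'.
  revert G HE'.
  induction H; intros G HE'; subst.
  - apply asub_top; eauto using wf_ctx_rebind, wf_typ_rebind.
  - apply asub_refl_tvar; eauto using wf_ctx_rebind, wf_typ_rebind.
  - destruct (Nat.eq_dec n (length G)) as [-> | Hn].
    + rewrite get_bound_top_length in H. injection H as <-.
      apply asub_top_inv in H2. contradiction.
    + eapply asub_trans_tvar; eauto.
      rewrite (get_bound_rebind_neq G E S ty_top); auto.
  - apply asub_arrow; auto.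
  - apply asub_allK. apply (IHasub (b_sub S0 :: G)); reflexivity.
  - apply asub_allK_allT; auto. apply (IHasub2 (b_sub S0 :: G)); reflexivity.
  - apply asub_allT; auto. apply (IHasub2 (b_sub ty_top :: G)); reflexivity.
Qed.

Fixpoint tsize (T : typ) : nat :=
  match T with
  | ty_top | ty_var _ => 1
  | ty_arrow A B | ty_allK A B | ty_allT A B => S (tsize A + tsize B)
  end.

Definition trans_at (Q : typ) : Prop :=
  forall E R T, asub E R Q -> asub E Q T -> asub E R T.

Lemma trans_at_of_smaller : forall E R Q, asub E R Q ->
  (forall Q', tsize Q' < tsize Q -> trans_at Q') ->
  forall T, asub E Q T -> asub E R T.
Proof.
  induction 1 as [E R HE HR | E n HE Hn | E n S Q Hn HQtop HQn HSQ IHSQ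
                 | E S S' T T' HS IHS HT IHT | E S T T' HT IHT
                 | E S0 S1 T0 T1 H0 IH0 H1 IH1 | E S0 S1 T0 T1 H0 IH0 H1 IH1];
    intros Hsmaller U HQU; simpl in Hsmaller.
  - apply asub_top_inv in HQU; subst. apply asub_top; assumption.
  - exact HQU.
  - exact (asub_tvar_of_bound E n S U Hn (IHSQ Hsmaller U HQU)).
  - inversion HQU; subst.
    + eapply asub_top_right, asub_arrow; eassumption.
    + apply asub_arrow; eapply Hsmaller; eauto; lia.
  - inversion HQU; subst.
    + eapply asub_top_right, asub_allK; eassumption.
    + apply asub_allK. eapply Hsmaller; eauto; lia.
    + apply asub_allK_allT; auto. eapply Hsmaller; eauto; lia.
  - inversion HQU; subst.
    + eapply asub_top_right, asub_allK_allT; eassumption.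
    + destruct (asub_regular _ _ _ H0) as [_ [_ HS0]].
      apply asub_allK_allT.
      * eapply Hsmaller; eauto; lia.
      * eapply Hsmaller; [| exact H1 |]; [lia |].
        apply (asub_narrow_top [] E S0); assumption.
  - inversion HQU; subst.
    + eapply asub_top_right, asub_allT; eassumption.
    + apply asub_allT; eapply Hsmaller; eauto; lia.
Qed.

Lemma asub_trans_at : forall Q, trans_at Q.
Proof.
  induction Q as [Q IH] using (induction_ltof1 _ tsize).
  intros E R T HRQ. apply (trans_at_of_smaller E R Q HRQ IH).
Qed.

Theorem lemma6p1 : forall (Theta : ctx) (R S T : typ),
  asub Theta R S -> asub Theta S T -> asub Theta R T.
Proof.
  intros Theta R S T. apply asub_trans_at.
Qed.
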